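(* Let ${\tt G}$ be a connected digraph with exactly $n>2$ edges. If the path poset $P({\tt G})$ is isomorphic to $\mathbb B(n)$ with its maximum removed, then ${\tt G}\cong{\tt P}_{n-1}$.
   Context: A digraph ${\tt G}=(V,E)$ has finite $V$ and $E\subseteq (V\times V)\setminus\{(v,v)\}$; connected means the underlying undirected graph is connected. A multipath of ${\tt G}$ is a spanning subgraph (all vertices, subset of edges) each of whose components is an isolated vertex or a simple directed path (edges $e_1,\dots,e_k$ with target of $e_i$ equal to source of $e_{i+1}$, no repeated vertex, not a cycle); $P({\tt G})$ is the set of multipaths ordered by inclusion of edge sets. $\mathbb B(n)$ is the power set of $\{0,\dots,n-1\}$ ordered by inclusion. ${\tt P}_m$ is the coherently oriented polygon with vertices $v_0,\dots,v_m$ and edges $(v_i,v_{i+1})$, $0\le i<m$, and $(v_m,v_0)$ (so it has $m+1$ edges). *)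

From mathcomp Require Import all_boot.
Set Implicit Arguments. Unset Strict Implicit. Unset Printing Implicit Defensive.

Definition digraph (V : finType) (E : {set V * V}) : Prop :=
  forall v : V, (v, v) \notin E.

Definition uadj (V : finType) (E : {set V * V}) : rel V :=
  fun x y => ((x, y) \in E) || ((y, x) \in E).

Definition dconnected (V : finType) (E : {set V * V}) : Prop :=
  forall x y : V, connect (uadj E) x y.

Definition comp (V : finType) (F : {set V * V}) (x : V) : {set V} :=
  [set y | connect (uadj F) x y].

Definition edges_in (V : finType) (F : {set V * V}) (C : {set V}) : {set V * V} :=
  [set e in F | (e.1 \in C) && (e.2 \in C)].

Definition path_edges (V : finType) (s : seq V) : {set V * V} :=
  [set e | e \in zip s (behead s)].

(* a multipath of (V,E): a spanning subgraph (V,F), F \subset E, each of whose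
   components is an isolated vertex or a simple directed path, i.e. is traversed
   by a duplicate-free sequence of vertices s (size 1 = isolated vertex) whose
   consecutive pairs are exactly the edges of the component. *)
Definition multipath (V : finType) (E F : {set V * V}) : Prop :=
  F \subset E /\
  forall x : V, exists s : seq V,
    [/\ uniq s, s != [::], comp F x = [set y in s] &
        edges_in F (comp F x) = path_edges s].

(* P(G) (multipaths ordered by inclusion) is isomorphic to B(n) minus its
   maximum (proper subsets of {0,...,n-1} ordered by inclusion). *)
Definition path_poset_iso_Bn_minus_top (V : finType) (E : {set V * V}) (n : nat)
  : Prop :=
  exists f : {set V * V} -> {set 'I_n},
    [/\ forall F, multipath E F -> f F != setT,
        forall S : {set 'I_n}, S != setT -> exists2 F, multipath E F & f F = S &
        forall F F', multipath E F -> multipath E F' ->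
          (F \subset F') = (f F \subset f F')].

(* the coherently oriented polygon P_m on vertices v_0..v_m ('I_m.+1),
   edges (v_i, v_{i+1}) for i < m and (v_m, v_0) *)
Definition polygon_edges (m : nat) : {set 'I_m.+1 * 'I_m.+1} :=
  [set e | (val e.2 == (val e.1).+1) || ((val e.1 == m) && (val e.2 == 0))].

Definition iso_polygon (V : finType) (E : {set V * V}) (m : nat) : Prop :=
  exists phi : V -> 'I_m.+1,
    bijective phi /\
    forall x y : V, ((x, y) \in E) = ((phi x, phi y) \in polygon_edges m).

(* The isomorphism f maps the empty multipath to the empty set and single
   edges to atoms.  Hence every proper subset of E lies in a multipath (take
   the preimage of the union of the atoms of its edges, which misses the atom
   of an omitted edge), whereas E itself is not a multipath (f E is not the
   top).  So E minus any edge is a multipath, and, as n > 2, any two edges lie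
   on a common path: in- and out-degrees are at most 1.  A vertex u without
   out-edge is then impossible: if (p, u) is its in-edge, the path of p in
   E minus (p, u) ends at p, and appending u to it gives a path carrying all
   of E.  Thus the edge relation is an injective function whose graph is
   connected, i.e. a single cycle through all n vertices. *)

From Pilot Require Import Defs.
From mathcomp Require Import all_boot zify.
Set Implicit Arguments. Unset Strict Implicit. Unset Printing Implicit Defensive.

Section ZipBehead.
Variable T : eqType.
Implicit Types (s t : seq T) (a b c x y : T).

Lemma mem_zip_behead_nth s x0 a b : (a, b) \in zip s (behead s) ->
  exists2 i, i.+1 < size s & nth x0 s i = a /\ nth x0 s i.+1 = b.
Proof.
move/(nthP (x0, x0)) => [i lt_i]; rewrite nth_zip_cond lt_i nth_behead => -[<- <-].
by exists i => //; move: lt_i; rewrite size_zip size_behead; case: (size s) => /=; lia.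
Qed.

Lemma uniq_zip_behead_succ s a b c : uniq s ->
  (a, b) \in zip s (behead s) -> (a, c) \in zip s (behead s) -> b = c.
Proof.
move=> us /(mem_zip_behead_nth a) [i lt_i [si si1]].
move=> /(mem_zip_behead_nth a) [j lt_j [sj sj1]].
have /eqP : nth a s i = nth a s j by rewrite si sj.
by rewrite nth_uniq ?(ltnW lt_i) ?(ltnW lt_j) // => /eqP ij; rewrite -si1 -sj1 ij.
Qed.

Lemma uniq_zip_behead_pred s a b c : uniq s ->
  (a, c) \in zip s (behead s) -> (b, c) \in zip s (behead s) -> a = b.
Proof.
move=> us /(mem_zip_behead_nth a) [i lt_i [si si1]].
move=> /(mem_zip_behead_nth a) [j lt_j [sj sj1]].
have /eqP : nth a s i.+1 = nth a s j.+1 by rewrite si1 sj1.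
by rewrite nth_uniq // => /eqP [ij]; rewrite -si -sj ij.
Qed.

Lemma zip_behead_succ_exists x t y : y \in x :: t -> y != last x t ->
  exists z, (y, z) \in zip (x :: t) t.
Proof.
elim: t x => [|z t IHt] x /=; first by rewrite inE => /eqP ->; rewrite eqxx.
rewrite inE => /orP[/eqP -> _|yt ylast]; first by exists z; rewrite inE eqxx.
by have [w yw] := IHt z yt ylast; exists w; rewrite inE yw orbT.
Qed.

Lemma zip_rcons_behead x t u :
  zip (x :: rcons t u) (rcons t u) = rcons (zip (x :: t) t) (last x t, u).
Proof. by elim: t x => [|z t IHt] x //=; rewrite IHt. Qed.

End ZipBehead.

Section Components.
Variable V : finType.
Implicit Types (E F : {set V * V}) (s : seq V) (a b x y : V).

Definition out_unique E := forall a b c, (a, b) \in E -> (a, c) \in E -> b = c.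
Definition in_unique E := forall a b c, (a, c) \in E -> (b, c) \in E -> a = b.

Lemma uadj_sym F : symmetric (uadj F).
Proof. by move=> x y; rewrite /uadj orbC. Qed.

Lemma uadj_connect_sym F : connect_sym (uadj F).
Proof. exact/sym_connect_sym/uadj_sym. Qed.

Lemma uadj_connect_mem F (S : {set V}) x y :
  (forall a b, uadj F a b -> a \in S -> b \in S) ->
  connect (uadj F) x y -> (x \in S) = (y \in S).
Proof. by move=> clS; apply: closed_connect; exact: (intro_closed (uadj_connect_sym F)). Qed.

Lemma mem_comp F x : x \in Defs.comp F x.
Proof. by rewrite inE connect0. Qed.

Lemma comp_uadj F x a b : a \in Defs.comp F x -> uadj F a b -> b \in Defs.comp F x.
Proof. by rewrite !inE => xa ab; apply: connect_trans xa (connect1 ab). Qed.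

Lemma comp_isolated F x : (forall y, ~~ uadj F x y) -> Defs.comp F x = [set x].
Proof.
move=> isox; apply/setP => y; rewrite !inE; apply/idP/eqP => [xy|<-]; last exact: connect0.
apply/eqP; rewrite -in_set1 -(uadj_connect_mem _ xy) ?inE //.
by move=> a b ab; rewrite inE => /eqP ax; move: ab; rewrite ax (negbTE (isox b)).
Qed.

Lemma dconnected_uadj E u : digraph E -> dconnected E -> E != set0 ->
  exists v, uadj E u v.
Proof.
move=> loopless connE /set0Pn [[a b] abE].
case: (pickP (uadj E u)) => [v uv|no_adj]; first by exists v.
have comp_u : Defs.comp E u = [set u] by apply: comp_isolated => y; rewrite no_adj.
have eq_u w : w = u by apply/eqP; rewrite -in_set1 -comp_u inE connE.
by move: (loopless a); rewrite {2}(eq_u a) -(eq_u b) abE.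
Qed.

Definition traverses F x s : Prop :=
  [/\ uniq s, s != [::], Defs.comp F x = [set y in s] &
      edges_in F (Defs.comp F x) = path_edges s].

Lemma traverses_isolated F x : (forall y, ~~ uadj F x y) -> traverses F x [:: x].
Proof.
move=> isox; rewrite /traverses comp_isolated //; split => //.
  by apply/setP => y; rewrite !inE.
apply/setP => -[a b]; rewrite !inE /=; apply/negbTE.
apply/andP => -[abF /andP[/eqP ax /eqP bx]].
by move: (isox x) abF; rewrite /uadj ax bx => /norP[/negbTE ->].
Qed.

Lemma traverses_full E s x : dconnected E -> uniq s -> (forall y, y \in s) ->
  E = path_edges s -> traverses E x s.
Proof.
move=> connE us alls Es; have compT : Defs.comp E x = setT.
  by apply/setP => y; rewrite !inE connE.
split => //; first by apply: contraTneq (alls x) => ->.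
  by rewrite compT; apply/setP => y; rewrite !inE alls.
by rewrite compT -Es; apply/setP => e; rewrite !inE !andbT.
Qed.

Lemma multipath_common_path E F a b c d : multipath E F ->
  (a, b) \in F -> (c, d) \in F -> connect (uadj F) a c ->
  exists s, [/\ uniq s, (a, b) \in zip s (behead s) & (c, d) \in zip s (behead s)].
Proof.
move=> [_ /(_ a) [s [us _ _ Fs]]] abF cdF ac.
have ca : c \in Defs.comp F a by rewrite inE.
have ba : b \in Defs.comp F a by apply: comp_uadj (mem_comp F a) _; rewrite /uadj abF.
have da : d \in Defs.comp F a by apply: comp_uadj ca _; rewrite /uadj cdF.
have : (a, b) \in edges_in F (Defs.comp F a) by rewrite inE abF /= mem_comp ba.
have : (c, d) \in edges_in F (Defs.comp F a) by rewrite inE cdF /= ca da.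
by rewrite Fs !inE; exists s.
Qed.

Lemma multipath0 E : multipath E set0.
Proof.
split=> [|x]; first exact: sub0set.
by exists [:: x]; apply: traverses_isolated => y; rewrite /uadj !inE.
Qed.

Lemma multipath1 E e : digraph E -> e \in E -> multipath E [set e].
Proof.
case: e => a b loopless abE.
have ab : a != b by apply: contraNneq (loopless a) => eq_ab; rewrite {2}eq_ab.
split=> [|x]; first by rewrite sub1set.
have uadjE u v : uadj [set (a, b)] u v = ((u, v) == (a, b)) || ((v, u) == (a, b)).
  by rewrite /uadj !inE.
have [xab|xab] := boolP (x \in [set a; b]); last first.
  exists [:: x]; apply: traverses_isolated => y; rewrite uadjE !xpair_eqE.
  by apply: contra xab => /orP[/andP[/eqP -> _]|/andP[_ /eqP ->]]; rewrite !inE eqxx ?orbT.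
have compx : Defs.comp [set (a, b)] x = [set a; b].
  apply/setP => y; rewrite [in LHS]inE; apply/idP/idP => [xy|].
    rewrite -(uadj_connect_mem (S := [set a; b]) _ xy) // => u v; rewrite uadjE !xpair_eqE.
    by case/orP => /andP[/eqP -> /eqP ->]; rewrite !inE !eqxx ?orbT.
  have conn_ab : connect (uadj [set (a, b)]) a b by rewrite connect1 // uadjE eqxx.
  have conn_ba : connect (uadj [set (a, b)]) b a.
    by rewrite uadj_connect_sym.
  by move: xab; rewrite !inE => /orP[]/eqP -> /orP[]/eqP ->; rewrite ?connect0.
exists [:: a; b]; rewrite /traverses compx; split => //; first by rewrite /= inE ab.
  by apply/setP => y; rewrite !inE.
by apply/setP => e; rewrite !inE; apply: andb_idr => /eqP -> /=; rewrite !eqxx ?orbT.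
Qed.

End Components.

Lemma notin_neq_setT (T : finType) (S : {set T}) x : x \notin S -> S != setT.
Proof. by apply: contraNneq => ->; rewrite inE. Qed.

Lemma exists_ord_neq n (i : 'I_n) : 1 < n -> exists j : 'I_n, j != i.
Proof.
move=> n_gt1; have [<-|i0_i] := eqVneq (Ordinal (ltnW n_gt1)) i.
  by exists (Ordinal n_gt1).
by exists (Ordinal (ltnW n_gt1)).
Qed.

Section PathPosetIso.
Variables (V : finType) (E : {set V * V}) (n : nat) (f : {set V * V} -> {set 'I_n}).
Hypotheses (loopless : digraph E) (n_gt1 : 1 < n)
  (f_proper : forall F, multipath E F -> f F != setT)
  (f_onto : forall S : {set 'I_n}, S != setT -> exists2 F, multipath E F & f F = S)
  (f_mono : forall F F', multipath E F -> multipath E F' ->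
     (F \subset F') = (f F \subset f F')).

Lemma f_set0 : f set0 = set0.
Proof.
have set0_neqT : set0 != [set: 'I_n].
  by apply: (notin_neq_setT (x := Ordinal (ltnW n_gt1))); rewrite inE.
have [F mpF fF] := f_onto set0_neqT.
by apply/eqP; rewrite -subset0 -fF -f_mono ?sub0set //; apply: multipath0.
Qed.

Lemma f_set1 e : e \in E -> exists i, f [set e] = [set i].
Proof.
move=> eE; have mp_e := multipath1 loopless eE.
have /set0Pn [i fe_i] : f [set e] != set0.
  apply/eqP => fe0; have : [set e] \subset set0.
    by rewrite f_mono ?fe0 ?f_set0 //; apply: multipath0.
  by rewrite subset0 -cards_eq0 cards1.
exists i; have [j ji] := exists_ord_neq i n_gt1.
have [F mpF fF] : exists2 F, multipath E F & f F = [set i].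
  by apply: f_onto; apply: (notin_neq_setT (x := j)); rewrite inE.
have : F \subset [set e] by rewrite f_mono // fF sub1set.
rewrite subset1 => /orP[/eqP Fe|/eqP F0]; first by rewrite -fF Fe.
by move: fF; rewrite F0 f_set0 => /setP /(_ i); rewrite !inE eqxx.
Qed.

Lemma proper_sub_multipath (A : {set V * V}) :
  A \proper E -> exists2 F, multipath E F & A \subset F.
Proof.
case/properP => AE [e0 e0E e0A]; have [i0 fe0] := f_set1 e0E.
have mp1 e : e \in A -> multipath E [set e] by move/(subsetP AE); apply: multipath1.
have i0_notin : i0 \notin \bigcup_(e in A) f [set e].
  apply/bigcupP => -[e eA i0e]; have : [set e0] \subset [set e].
    by rewrite f_mono ?fe0 ?sub1set //; [apply: multipath1 | apply: mp1].
  by rewrite sub1set inE => /eqP e0e; rewrite e0e eA in e0A.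
have [F mpF fF] := f_onto (notin_neq_setT i0_notin).
exists F => //; apply/subsetP => e eA.
by rewrite -sub1set f_mono ?fF ?(bigcup_sup e eA) //; apply: mp1.
Qed.

Lemma not_multipath_full : ~ multipath E E.
Proof.
move=> mpE; have /subsetPn [i _ iNfE] : ~~ ([set: 'I_n] \subset f E).
  by rewrite subTset f_proper.
have [j ji] := exists_ord_neq i n_gt1.
have [F [FE mpF'] fF] : exists2 F, multipath E F & f F = ~: [set j].
  by apply: f_onto; apply: (notin_neq_setT (x := j)); rewrite !inE eqxx.
have : f F \subset f E by rewrite -f_mono.
by move/subsetP/(_ i); rewrite fF !inE eq_sym ji => /(_ isT); apply/negP.
Qed.

Lemma multipath_setD1 e : e \in E -> multipath E (E :\ e).
Proof.
move=> eE; have [F mpF EeF] := proper_sub_multipath (properD1 eE).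
have FE : F \subset E by case: mpF.
have eNF : e \notin F.
  apply/negP => eF; suff F_E : F = E by apply: not_multipath_full; rewrite -{2}F_E.
  by apply/eqP; rewrite eqEsubset FE -(setD1K eE) subUset sub1set eF.
suff -> : E :\ e = F by [].
apply/eqP; rewrite eqEsubset EeF; apply/subsetP => x xF.
by rewrite in_setD1 (subsetP FE x xF) andbT; apply: contraNneq eNF => <-.
Qed.

Lemma pair_sub_multipath e1 e2 : 2 < #|E| -> e1 \in E -> e2 \in E ->
  exists2 F, multipath E F & (e1 \in F) && (e2 \in F).
Proof.
move=> E_gt2 e1E e2E; have : [set e1; e2] \proper E.
  rewrite properEcard subUset !sub1set e1E e2E cards2.
  by apply: leq_ltn_trans E_gt2; rewrite ltnS leq_b1.
case/proper_sub_multipath => F mpF /subsetP sub12; exists F => //.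
by rewrite !sub12 // !inE eqxx ?orbT.
Qed.

Lemma out_edge_uniq : 2 < #|E| -> out_unique E.
Proof.
move=> E_gt2 a b c abE acE; have [F mpF /andP[abF acF]] := pair_sub_multipath E_gt2 abE acE.
have [s [uniq_s ab_s ac_s]] := multipath_common_path mpF abF acF (connect0 _ _).
exact: uniq_zip_behead_succ uniq_s ab_s ac_s.
Qed.

Lemma in_edge_uniq : 2 < #|E| -> in_unique E.
Proof.
move=> E_gt2 a b c acE bcE; have [F mpF /andP[acF bcF]] := pair_sub_multipath E_gt2 acE bcE.
have conn_ab : connect (uadj F) a b.
  by apply: (connect_trans (y := c)); apply: connect1; rewrite /uadj ?acF ?bcF ?orbT.
have [s [uniq_s ac_s bc_s]] := multipath_common_path mpF acF bcF conn_ab.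
exact: uniq_zip_behead_pred uniq_s ac_s bc_s.
Qed.

End PathPosetIso.

Lemma uadj_setD1 (V : finType) (E : {set V * V}) e a b :
  uadj E a b -> ~~ uadj (E :\ e) a b -> ((a, b) == e) || ((b, a) == e).
Proof.
rewrite /uadj !in_setD1 negb_or => /orP[] ->; rewrite andbT => /andP[].
  by move=> /negPn ->.
by move=> _ /negPn ->; rewrite orbT.
Qed.

Section Sink.
Variables (V : finType) (E : {set V * V}) (p u : V).
Hypotheses (loopless : digraph E) (connE : dconnected E)
  (out_uniq : out_unique E) (in_uniq : in_unique E)
  (pu : (p, u) \in E) (no_out : forall v, (u, v) \notin E).

Let F := E :\ (p, u).

Lemma sink_isolated z : ~~ uadj F u z.
Proof.
rewrite /uadj !inE (negbTE (no_out z)) andbF /=.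
by apply/andP => -[zu_ne zu]; rewrite (in_uniq zu pu) eqxx in zu_ne.
Qed.

Lemma sink_notin_comp : u \notin Defs.comp F p.
Proof.
rewrite inE uadj_connect_sym; apply/negP => conn_up.
have : p \in Defs.comp F u by rewrite inE.
rewrite comp_isolated ?inE; last exact: sink_isolated.
by move/eqP => pu_eq; move: (loopless p); rewrite {2}pu_eq pu.
Qed.

Lemma comp_sink y : y != u -> y \in Defs.comp F p.
Proof.
move=> yu; suff : y \in u |: Defs.comp F p by rewrite !inE (negbTE yu).
rewrite -(uadj_connect_mem _ (connE p y)) ?setU1r ?mem_comp // => a b ab.
rewrite !in_setU1 => /orP[/eqP au|ap].
  move: ab; rewrite /uadj au (negbTE (no_out b)) /= => bu.
  by rewrite (in_uniq bu pu) mem_comp orbT.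
have [abF|abF] := boolP (uadj F a b); first by rewrite (comp_uadj ap abF) orbT.
by case/orP: (uadj_setD1 ab abF) => /eqP [] => [_ -> | -> _]; rewrite ?eqxx ?mem_comp ?orbT.
Qed.

Variables (x : V) (t : seq V).
Hypothesis trav : traverses F p (x :: t).

Lemma sink_pred_last : last x t = p.
Proof.
case: trav => _ _ compF pathF.
have pxt : p \in x :: t by rewrite -[_ \in _]in_set -compF mem_comp.
apply/eqP; rewrite eq_sym; apply: contraTT isT => p_last.
have [z pz] := zip_behead_succ_exists pxt p_last.
have : (p, z) \in path_edges (x :: t) by rewrite inE.
rewrite -pathF !inE => /andP[/andP[pz_ne pzE] _].
by rewrite (out_uniq pzE pu) eqxx in pz_ne.
Qed.

Lemma setD1_sink_path_edges : F = path_edges (x :: t).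
Proof.
case: trav => _ _ _ <-; apply/setP => e; rewrite /edges_in [RHS]in_set.
apply/esym/andb_idr => eF.
have e_uadj : uadj F e.1 e.2 by rewrite /uadj -surjective_pairing eF.
rewrite !comp_sink //; apply: contraTneq e_uadj => ->.
  by rewrite uadj_sym (negbTE (sink_isolated _)).
by rewrite (negbTE (sink_isolated _)).
Qed.

Lemma sink_multipath_full : multipath E E.
Proof.
case: trav => uniq_xt _ compF _.
have u_notin : u \notin x :: t by rewrite -[_ \in _]in_set -compF sink_notin_comp.
split=> // w; exists (rcons (x :: t) u); apply: traverses_full => //.
- by rewrite rcons_uniq u_notin.
- move=> y; rewrite mem_rcons inE; have [//|yu] := eqVneq y u.
  by rewrite -[_ \in _]in_set -compF comp_sink.
apply/setP => e; rewrite -(setD1K pu) -/F setD1_sink_path_edges !inE /=.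
by rewrite zip_rcons_behead mem_rcons inE sink_pred_last.
Qed.

End Sink.

Lemma exists_out_edge (V : finType) (E : {set V * V}) u :
  digraph E -> dconnected E -> E != set0 ->
  out_unique E -> in_unique E ->
  (forall e, e \in E -> multipath E (E :\ e)) -> ~ multipath E E ->
  exists v, (u, v) \in E.
Proof.
move=> loopless connE E_ne0 out_uniq in_uniq mp_setD1 not_full.
case: (boolP [exists v, (u, v) \in E]) => [/existsP //|/existsPn no_out].
have [p pu] : exists p, (p, u) \in E.
  have [v] := dconnected_uadj u loopless connE E_ne0.
  by rewrite /uadj (negbTE (no_out v)) => vu; exists v.
case: (mp_setD1 _ pu) => _ /(_ p) [[|x t] trav]; first by case: trav.
by case: not_full; apply: sink_multipath_full trav.
Qed.

Lemma mem_polygon_edges m (i j : 'I_m.+1) :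
  ((i, j) \in polygon_edges m) = (val j == (val i).+1 %% m.+1).
Proof.
rewrite inE /=; case: (eqVneq (val i) m) => [->|im].
  by rewrite modnn (ltn_eqF (ltn_ord j)).
by rewrite orbF modn_small // ltnS ltn_neqAle im -ltnS ltn_ord.
Qed.

Section Orbit.
Variables (V : finType) (g : V -> V) (x0 : V).
Hypotheses (g_inj : injective g) (orbit_full : forall y, fconnect g x0 y).

Lemma order_orbit_full : order g x0 = #|V|.
Proof. by apply: eq_card => y; rewrite inE orbit_full. Qed.

Lemma findex_inj : injective (findex g x0).
Proof. by move=> y z eq_yz; rewrite -(iter_findex (orbit_full y)) eq_yz iter_findex. Qed.

Lemma findex_succ y : findex g x0 (g y) = (findex g x0 y).+1 %% order g x0.
Proof.
have lt_y := findex_max (orbit_full y); rewrite -{1}(iter_findex (orbit_full y)) -iterS.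
move: lt_y; rewrite leq_eqVlt => /orP[/eqP eq_ord|lt_y].
  by rewrite eq_ord iter_order // findex0 modnn.
by rewrite findex_iter // modn_small.
Qed.

Lemma iso_polygon_orbit m : #|V| = m.+1 -> iso_polygon [set e | e.2 == g e.1] m.
Proof.
move=> card_V; have lt_findex y : findex g x0 y < m.+1.
  by rewrite -card_V -order_orbit_full findex_max.
exists (fun y => Ordinal (lt_findex y)); split.
  apply: inj_card_bij; last by rewrite card_ord card_V.
  by move=> y z [/findex_inj].
move=> x y; rewrite inE mem_polygon_edges /= -card_V -order_orbit_full -findex_succ.
by rewrite (inj_eq findex_inj).
Qed.

End Orbit.

Lemma card_fun_graph (V : finType) (g : V -> V) : #|[set e : V * V | e.2 == g e.1]| = #|V|.
Proof.
have -> : [set e : V * V | e.2 == g e.1] = [set (x, g x) | x in V].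
  apply/setP => -[x y]; rewrite inE; apply/eqP/imsetP => [/= ->|[z _ [-> ->]]] //.
  by exists x.
by rewrite card_imset ?cardsT // => x y [].
Qed.

Lemma iso_polygon_functional (V : finType) (E : {set V * V}) m :
  dconnected E -> #|E| = m.+1 ->
  out_unique E -> in_unique E ->
  (forall u, exists v, (u, v) \in E) ->
  iso_polygon E m.
Proof.
move=> connE card_E out_uniq in_uniq out_exists.
have [g gE] := fin_all_exists out_exists.
have E_graph : E = [set e | e.2 == g e.1].
  apply/setP => -[x y]; rewrite inE /=.
  by apply/idP/eqP => [xy|->]; [apply: out_uniq xy (gE x) | apply: gE].
have g_inj : injective g by move=> x y gxy; apply: in_uniq (gE x) _; rewrite gxy gE.
have /set0Pn [[x0 _] _] : E != set0 by rewrite -card_gt0 card_E.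
have orbit_full y : fconnect g x0 y.
  apply: connect_sub (connE x0 y) => a b; rewrite /uadj E_graph !inE /=.
  case/orP => /eqP ->; first exact: fconnect1.
  by rewrite fconnect_sym //; apply: fconnect1.
rewrite E_graph; apply: (iso_polygon_orbit g_inj orbit_full).
by rewrite -card_E E_graph card_fun_graph.
Qed.

Theorem proposition2p37 (V : finType) (E : {set V * V}) (n : nat) :
  digraph E -> dconnected E -> #|E| = n -> 2 < n ->
  path_poset_iso_Bn_minus_top E n ->
  iso_polygon E n.-1.
Proof.
move=> loopless connE card_E n_gt2 [f [f_proper f_onto f_mono]].
have n_gt1 := ltnW n_gt2; have E_gt2 : 2 < #|E| by rewrite card_E.
have E_ne0 : E != set0 by rewrite -card_gt0 (ltn_trans _ E_gt2).
have out_uniq := out_edge_uniq loopless n_gt1 f_onto f_mono E_gt2.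
have in_uniq := in_edge_uniq loopless n_gt1 f_onto f_mono E_gt2.
have mp_setD1 := multipath_setD1 loopless n_gt1 f_proper f_onto f_mono.
have not_full := not_multipath_full n_gt1 f_proper f_onto f_mono.
have out_exists u :=
  exists_out_edge u loopless connE E_ne0 out_uniq in_uniq mp_setD1 not_full.
case: n card_E n_gt2 {f f_proper f_onto f_mono n_gt1} => // m card_E _.
exact: iso_polygon_functional.
Qed.
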